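(* For all integers $s\ge 1$ and $p\ge 0$ the following identities of formal series hold (empty sums are $0$): 1. $(2s-1)!\,\mathrm{I}_{2s}^{2p}(q)=\sum_{r=1}^{p}t(2s,2r)\mathrm{D}^{2r-1}A_{2p-2r+1}(q^2)+\sum_{r=p+1}^{s}t(2s,2r)\mathrm{D}^{2p}A_{2r-2p-1}(q^2)$; 2. $(2s)!\,\mathrm{I}_{2s+1}^{2p+1}(q)=\sum_{r=0}^{p}2^{-2r}t(2s+1,2r+1)\mathrm{D}^{2r}C_{2p-2r+1}(q)+\sum_{r=p+1}^{s}2^{-2r}t(2s+1,2r+1)\mathrm{D}^{2p+1}F_{2r-2p-1}(q)$; 3. $(2s-1)!(-1)^{s-1}\mathrm{II}_{2s}^{2p}(q)=\sum_{r=1}^{p}t(2s,2r)\mathrm{D}^{2r-1}L_{2p-2r+1}(q^2)+\sum_{r=p+1}^{s}t(2s,2r)\mathrm{D}^{2p}B_{2r-2p-1}(q^2)$; 4. $(2s)!(-1)^s\mathrm{II}_{2s+1}^{2p}(q)=\sum_{r=0}^{p-1}2^{-2r}t(2s+1,2r+1)\mathrm{D}^{2r}N_{2p-2r}(q)+\sum_{r=p}^{s}2^{-2r}t(2s+1,2r+1)\mathrm{D}^{2p}G_{2r-2p}(q)$; 5. $(2s-1)!\,\mathrm{III}_{2s}^{2p}(q)=\sum_{r=1}^{p}t(2s,2r)\mathrm{D}^{2r-1}F_{2p-2r+1}(q)+\sum_{r=p+1}^{s}t(2s,2r)\mathrm{D}^{2p}C_{2r-2p-1}(q)$; 6. $(2s)!\,\mathrm{III}_{2s+1}^{2p+1}(q)=\sum_{r=0}^{p}t(2s+1,2r+1)\mathrm{D}^{2r}H_{2p-2r+1}(q)+\sum_{r=p+1}^{s}2^{2p+1-2r}t(2s+1,2r+1)\mathrm{D}^{2p+1}H_{2r-2p-1}(q)$;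 7. $(2s-1)!(-1)^{s-1}\mathrm{IV}_{2s}^{2p}(q)=\sum_{r=1}^{p}t(2s,2r)\mathrm{D}^{2r-1}Q_{2p-2r+1}(q)+\sum_{r=p+1}^{s}t(2s,2r)\mathrm{D}^{2p}D_{2r-2p-1}(q)$; 8. $(2s)!(-1)^s\mathrm{IV}_{2s+1}^{2p}(q)=\sum_{r=0}^{p-1}t(2s+1,2r+1)\mathrm{D}^{2r}T_{2p-2r}(q)+\sum_{r=p}^{s}2^{2p-2r}t(2s+1,2r+1)\mathrm{D}^{2p}J_{2r-2p}(q)$; 9. $(2s-1)!\,\mathrm{V}_{2s}^{2p}(q)=\sum_{r=1}^{p}t(2s,2r)\mathrm{D}^{2r-1}B_{2p-2r+1}(q^2)+\sum_{r=p+1}^{s}t(2s,2r)\mathrm{D}^{2p}L_{2r-2p-1}(q^2)$; 10. $(2s)!\,\mathrm{V}_{2s+1}^{2p+1}(q)=\sum_{r=0}^{p}2^{-2r}t(2s+1,2r+1)\mathrm{D}^{2r}D_{2p-2r+1}(q)+\sum_{r=p+1}^{s}2^{-2r}t(2s+1,2r+1)\mathrm{D}^{2p+1}Q_{2r-2p-1}(q)$; 11. $(2s-1)!(-1)^{s-1}\mathrm{VI}_{2s}^{2p}(q)=\sum_{r=1}^{p}t(2s,2r)\mathrm{D}^{2r-1}M_{2p-2r+1}(q^2)+\sum_{r=p+1}^{s}t(2s,2r)\mathrm{D}^{2p}M_{2r-2p-1}(q^2)$; 12. $(2s)!(-1)^s\mathrm{VI}_{2s+1}^{2p}(q)=\sum_{r=0}^{p-1}2^{-2r}t(2s+1,2r+1)\mathrm{D}^{2r}P_{2p-2r}(q)+\sum_{r=p}^{s}2^{-2r}t(2s+1,2r+1)\mathrm{D}^{2p}R_{2r-2p}(q)$;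 13. $(2s-1)!\,\mathrm{VII}_{2s}^{2p+1}(q)=\sum_{r=1}^{p}t(2s,2r)\mathrm{D}^{2r-1}G_{2p-2r+2}(q)+\sum_{r=p+1}^{s}t(2s,2r)\mathrm{D}^{2p+1}N_{2r-2p-2}(q)$; 14. $(2s)!\,\mathrm{VII}_{2s+1}^{2p}(q)=\sum_{r=0}^{p-1}t(2s+1,2r+1)\mathrm{D}^{2r}J_{2p-2r}(q)+\sum_{r=p}^{s}2^{2p-2r}t(2s+1,2r+1)\mathrm{D}^{2p}T_{2r-2p}(q)$; 15. $(2s-1)!(-1)^{s-1}\mathrm{VIII}_{2s}^{2p+1}(q)=\sum_{r=1}^{p}t(2s,2r)\mathrm{D}^{2r-1}R_{2p-2r+2}(q)+\sum_{r=p+1}^{s}t(2s,2r)\mathrm{D}^{2p+1}P_{2r-2p-2}(q)$; 16. $(2s)!(-1)^s\mathrm{VIII}_{2s+1}^{2p+1}(q)=\sum_{r=0}^{p}t(2s+1,2r+1)\mathrm{D}^{2r}U_{2p-2r+1}(q)+\sum_{r=p+1}^{s}2^{2p-2r+1}t(2s+1,2r+1)\mathrm{D}^{2p+1}U_{2r-2p-1}(q)$.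
   Context: All series are formal series in $q^{1/2}$ (equivalently convergent for $0<|q|<1$ with a fixed choice of $q^{1/2}$). For integers $s\ge1$, $p\ge0$ (sums over $n\ge1$): $\mathrm{I}_s^p=\sum\frac{n^pq^{ns}}{(1-q^{2n})^s}$, $\mathrm{II}_s^p=\sum\frac{n^pq^{ns}}{(1+q^{2n})^s}$, $\mathrm{III}_s^p=\sum\frac{(2n-1)^pq^{(n-\frac12)s}}{(1-q^{2n-1})^s}$, $\mathrm{IV}_s^p=\sum\frac{(2n-1)^pq^{(n-\frac12)s}}{(1+q^{2n-1})^s}$, $\mathrm{V}_s^p=\sum\frac{(-1)^{n-1}n^pq^{ns}}{(1-q^{2n})^s}$, $\mathrm{VI}_s^p=\sum\frac{(-1)^{n-1}n^pq^{ns}}{(1+q^{2n})^s}$, $\mathrm{VII}_s^p=\sum\frac{(-1)^{n-1}(2n-1)^pq^{(n-\frac12)s}}{(1-q^{2n-1})^s}$, $\mathrm{VIII}_s^p=\sum\frac{(-1)^{n-1}(2n-1)^pq^{(n-\frac12)s}}{(1+q^{2n-1})^s}$. For integers $s\ge0$ (sums over $n\ge1$): $A_s=\sum\frac{n^sq^n}{1-q^n}$, $B_s=\sum\frac{(-1)^{n-1}n^sq^n}{1-q^n}$, $C_s=\sum\frac{n^sq^n}{1-q^{2n}}$, $D_s=\sum\frac{(-1)^{n-1}n^sq^n}{1-q^{2n}}$, $F_s=\sum\frac{(2n-1)^sq^{2n-1}}{1-q^{2n-1}}$, $G_s=\sum\frac{(-1)^{n-1}(2n-1)^sq^{2n-1}}{1-q^{2n-1}}$,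 $H_s=\sum\frac{(2n-1)^sq^{n-1/2}}{1-q^{2n-1}}$, $J_s=\sum\frac{(-1)^{n-1}(2n-1)^sq^{n-1/2}}{1-q^{2n-1}}$, $L_s=\sum\frac{n^sq^n}{1+q^n}$, $M_s=\sum\frac{(-1)^{n-1}n^sq^n}{1+q^n}$, $N_s=\sum\frac{n^sq^n}{1+q^{2n}}$, $P_s=\sum\frac{(-1)^{n-1}n^sq^n}{1+q^{2n}}$, $Q_s=\sum\frac{(2n-1)^sq^{2n-1}}{1+q^{2n-1}}$, $R_s=\sum\frac{(-1)^{n-1}(2n-1)^sq^{2n-1}}{1+q^{2n-1}}$, $T_s=\sum\frac{(2n-1)^sq^{n-1/2}}{1+q^{2n-1}}$, $U_s=\sum\frac{(-1)^{n-1}(2n-1)^sq^{n-1/2}}{1+q^{2n-1}}$. Central factorial numbers: for $n\ge1$, $x^2\prod_{k=1}^{n-1}(x^2-k^2)=\sum_{k=1}^n t(2n,2k)x^{2k}$; for $n\ge0$, $x\prod_{k=1}^n(x^2-\frac{(2k-1)^2}{4})=\sum_{k=0}^n t(2n+1,2k+1)x^{2k+1}$. The operator $\mathrm{D}$ acts on series $\sum_{\alpha\in\frac12\mathbb{Z}}a_\alpha q^\alpha$ by $\mathrm{D}\sum a_\alpha q^\alpha=\sum\alpha a_\alpha q^\alpha$ (i.e. $q\,d/dq$); $\mathrm{D}^0$ is the identity, and $\mathrm{D}^jF(q^2)$ denotes the series $\mathrm{D}^jF$ with $q$ replaced by $q^2$. *)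

From HB Require Import structures.
From mathcomp Require Import all_boot all_order all_algebra.
Set Implicit Arguments. Unset Strict Implicit. Unset Printing Implicit Defensive.
Import Order.TTheory GRing.Theory Num.Theory.
Local Open Scope ring_scope.

(* A formal series sum_{m>=0} f m * q^{m/2}; [f m] is the coefficient of q^{m/2}.
   (All series of the paper only involve nonnegative half-integer exponents.) *)
Definition fps := nat -> rat.

Definition fone : fps := fun m => (m == 0%N)%:R.
Definition fmono (c : rat) (a : nat) : fps := fun m => if m == a then c else 0.
Definition fmul (f g : fps) : fps := fun m => \sum_(i < m.+1) f i * g (m - i)%N.
Definition fpow (f : fps) (k : nat) : fps := iter k (fmul f) fone.
(* 1/(1 - g) = sum_k g^k, for g with zero constant term *)
Definition fgeom (g : fps) : fps := fun m => \sum_(k < m.+1) fpow g k m.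
(* sum_{n>=1} F n, for families where F n has no term below q^{n/2}
   (true for every family used below), so the coefficient of q^{m/2}
   only receives contributions from n <= m. *)
Definition fsumn (F : nat -> fps) : fps := fun m => \sum_(1 <= n < m.+2) F n m.
(* the operator D = q d/dq : q^{m/2} |-> (m/2) q^{m/2} *)
Definition fD (f : fps) : fps := fun m => (m%:R / 2) * f m.
Definition fDn (j : nat) (f : fps) : fps := iter j fD f.
(* substitution q -> q^2 : q^{m/2} |-> q^m *)
Definition fsq (f : fps) : fps := fun m => if odd m then 0 else f m./2.

(* sum_{n>=1} c(n) q^{a(n)/2} / (1 - eps q^{b(n)/2})^s *)
Definition lambert (c : nat -> rat) (a b : nat -> nat) (eps : rat) (s : nat) : fps :=
  fsumn (fun n => fmul (fmono (c n) (a n)) (fpow (fgeom (fmono eps (b n))) s)).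

Definition sgn (n : nat) : rat := (-1) ^+ n.-1.
Definition odn (n : nat) : nat := (2 * n).-1.

(* Roman-numeral series  (s = power of the denominator, p = power of n) *)
Definition serI (s p : nat) := lambert (fun n => n%:R ^+ p) (fun n => 2 * n * s)%N (fun n => 4 * n)%N 1 s.
Definition serII (s p : nat) := lambert (fun n => n%:R ^+ p) (fun n => 2 * n * s)%N (fun n => 4 * n)%N (-1) s.
Definition serIII (s p : nat) := lambert (fun n => (odn n)%:R ^+ p) (fun n => odn n * s)%N (fun n => 2 * odn n)%N 1 s.
Definition serIV (s p : nat) := lambert (fun n => (odn n)%:R ^+ p) (fun n => odn n * s)%N (fun n => 2 * odn n)%N (-1) s.
Definition serV (s p : nat) := lambert (fun n => sgn n * n%:R ^+ p) (fun n => 2 * n * s)%N (fun n => 4 * n)%N 1 s.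
Definition serVI (s p : nat) := lambert (fun n => sgn n * n%:R ^+ p) (fun n => 2 * n * s)%N (fun n => 4 * n)%N (-1) s.
Definition serVII (s p : nat) := lambert (fun n => sgn n * (odn n)%:R ^+ p) (fun n => odn n * s)%N (fun n => 2 * odn n)%N 1 s.
Definition serVIII (s p : nat) := lambert (fun n => sgn n * (odn n)%:R ^+ p) (fun n => odn n * s)%N (fun n => 2 * odn n)%N (-1) s.

Definition serA (s : nat) := lambert (fun n => n%:R ^+ s) (fun n => 2 * n)%N (fun n => 2 * n)%N 1 1.
Definition serB (s : nat) := lambert (fun n => sgn n * n%:R ^+ s) (fun n => 2 * n)%N (fun n => 2 * n)%N 1 1.
Definition serC (s : nat) := lambert (fun n => n%:R ^+ s) (fun n => 2 * n)%N (fun n => 4 * n)%N 1 1.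
Definition serD (s : nat) := lambert (fun n => sgn n * n%:R ^+ s) (fun n => 2 * n)%N (fun n => 4 * n)%N 1 1.
Definition serF (s : nat) := lambert (fun n => (odn n)%:R ^+ s) (fun n => 2 * odn n)%N (fun n => 2 * odn n)%N 1 1.
Definition serG (s : nat) := lambert (fun n => sgn n * (odn n)%:R ^+ s) (fun n => 2 * odn n)%N (fun n => 2 * odn n)%N 1 1.
Definition serH (s : nat) := lambert (fun n => (odn n)%:R ^+ s) (fun n => odn n)%N (fun n => 2 * odn n)%N 1 1.
Definition serJ (s : nat) := lambert (fun n => sgn n * (odn n)%:R ^+ s) (fun n => odn n)%N (fun n => 2 * odn n)%N 1 1.
Definition serL (s : nat) := lambert (fun n => n%:R ^+ s) (fun n => 2 * n)%N (fun n => 2 * n)%N (-1) 1.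
Definition serM (s : nat) := lambert (fun n => sgn n * n%:R ^+ s) (fun n => 2 * n)%N (fun n => 2 * n)%N (-1) 1.
Definition serN (s : nat) := lambert (fun n => n%:R ^+ s) (fun n => 2 * n)%N (fun n => 4 * n)%N (-1) 1.
Definition serP (s : nat) := lambert (fun n => sgn n * n%:R ^+ s) (fun n => 2 * n)%N (fun n => 4 * n)%N (-1) 1.
Definition serQ (s : nat) := lambert (fun n => (odn n)%:R ^+ s) (fun n => 2 * odn n)%N (fun n => 2 * odn n)%N (-1) 1.
Definition serR (s : nat) := lambert (fun n => sgn n * (odn n)%:R ^+ s) (fun n => 2 * odn n)%N (fun n => 2 * odn n)%N (-1) 1.
Definition serT (s : nat) := lambert (fun n => (odn n)%:R ^+ s) (fun n => odn n)%N (fun n => 2 * odn n)%N (-1) 1.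
Definition serU (s : nat) := lambert (fun n => sgn n * (odn n)%:R ^+ s) (fun n => odn n)%N (fun n => 2 * odn n)%N (-1) 1.

(* central factorial numbers:
   tce n k = t(2n,2k):  x^2 prod_{j=1}^{n-1} (x^2 - j^2) = sum_k t(2n,2k) x^{2k}
   tco n k = t(2n+1,2k+1): x prod_{j=1}^{n} (x^2 - (2j-1)^2/4) = sum_k t(2n+1,2k+1) x^{2k+1} *)
Definition tce (n k : nat) : rat :=
  (('X : {poly rat}) ^+ 2 * \prod_(1 <= j < n) ('X ^+ 2 - (j%:R ^+ 2)%:P)) `_ (2 * k).
Definition tco (n k : nat) : rat :=
  (('X : {poly rat}) * \prod_(1 <= j < n.+1) ('X ^+ 2 - ((odn j)%:R ^+ 2 / 4)%:P)) `_ (2 * k).+1.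

From HB Require Import structures.
From mathcomp Require Import all_boot all_order all_algebra.
From mathcomp Require Import ring zify.
Import Order.TTheory GRing.Theory Num.Theory.
Local Open Scope ring_scope.

(* Expanding [(1 - eps x)^-S] binomially turns each left-hand side into a double series
   over [n] and the expansion index [j].  After the shift [J = j + s - 1] (resp. [j + s]),
   whose extra terms vanish, the binomial coefficient is a rising factorial centred at [J]
   (resp. [J - 1/2]), hence by definition of the central factorial numbers the polynomial
   [sum_r t(2s, 2r) J^(2r-1)] (resp. [sum_r t(2s+1, 2r+1) (J - 1/2)^(2r)]).  Each monomial
   [n^k J^l] so obtained is [(nJ)^min(k,l)] times a power of [n] or of [J] alone: the first
   factor is produced by [D], and summing the second over the other index (after exchanging
   the roles of [n] and [J] when [l > k]) yields one of the Lambert series [A, ..., U]. *)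

(** * Coefficients of products and geometric series *)

Lemma fmul_monoE (c : rat) (a : nat) (g : fps) (t : nat) :
  fmul (fmono c a) g t = if (a <= t)%N then c * g (t - a)%N else 0.
Proof.
rewrite /fmul /fmono.
rewrite (eq_bigr (fun i : 'I_t.+1 => if nat_of_ord i == a then c * g (t - a)%N else 0)).
  by rewrite -big_mkcond (big_ord1_eq _ (fun=> c * g (t - a)%N)) ltnS.
by move=> i _; case: eqP => [->|]; rewrite ?mul0r.
Qed.

Lemma fmulr1 (f : fps) t : fmul f fone t = f t.
Proof.
rewrite /fmul /fone.
rewrite (eq_bigr (fun i : 'I_t.+1 => if nat_of_ord i == t then f t else 0)).
  by rewrite -big_mkcond (big_ord1_eq _ (fun=> f t)) ltnSn.
move=> i _; case: (eqVneq (nat_of_ord i) t) => [->|hne]; first by rewrite subnn mulr1.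
have -> : (t - i == 0)%N = false by have := ltn_ord i; lia.
by rewrite mulr0.
Qed.

Lemma fpow_monoE (c : rat) (b k t : nat) :
  fpow (fmono c b) k t = fmono (c ^+ k) (k * b) t.
Proof.
elim: k t => [|k IH] t; first by rewrite /fpow /= /fone /fmono mul0n; case: (t == 0%N).
rewrite /fpow iterS -/(fpow (fmono c b) k) fmul_monoE IH /fmono.
case: leqP => h.
- have -> : (t - b == k * b)%N = (t == k.+1 * b)%N by rewrite mulSn; apply/eqP/eqP; lia.
  by case: (t == k.+1 * b)%N; rewrite ?exprS ?mulr0.
- by case: eqP => //; rewrite mulSn; lia.
Qed.

Lemma eqn_mul_divn (t k b : nat) : (0 < b)%N ->
  (t == k * b)%N = (b %| t)%N && (k == t %/ b)%N.
Proof.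
move=> hb; apply/eqP/andP => [->|[/dvdnP [q ->] /eqP ->]]; last by rewrite mulnK.
by rewrite dvdn_mull // mulnK.
Qed.

Lemma fgeom_monoE (eps : rat) (b t : nat) : (0 < b)%N ->
  fgeom (fmono eps b) t = if (b %| t)%N then eps ^+ (t %/ b) else 0.
Proof.
move=> hb; rewrite /fgeom.
rewrite (eq_bigr (fun k : 'I_t.+1 => if (b %| t)%N then
   (if nat_of_ord k == (t %/ b)%N then eps ^+ (t %/ b) else 0) else 0)); last first.
  move=> k _; rewrite fpow_monoE /fmono eqn_mul_divn //.
  by case: (b %| t)%N => //=; case: eqP => // ->.
case: (b %| t)%N; last by rewrite big1.
by rewrite -big_mkcond (big_ord1_eq _ (fun=> eps ^+ (t %/ b))) ltnS leq_div.
Qed.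

(** * Rising factorials and negative binomial coefficients *)

(* [risef S k / (S - 1)!] is the binomial coefficient [C(k + S - 1, S - 1)]. *)
Definition risef (S : nat) (x : rat) : rat := \prod_(1 <= i < S) (x + i%:R).

Lemma risef1 x : risef 1 x = 1.
Proof. by rewrite /risef big_geq. Qed.

Lemma risefSr S x : (0 < S)%N -> risef S.+1 x = risef S x * (x + S%:R).
Proof. by move=> hS; rewrite /risef big_nat_recr. Qed.

Lemma risefSl S x : (0 < S)%N -> risef S.+1 x = (x + 1) * risef S (x + 1).
Proof.
move=> hS; rewrite /risef big_nat_recl //; congr (_ * _).
by apply: eq_big_nat => i _; rewrite -addn1 natrD addrA (addrC _ 1) addrA (addrC 1).
Qed.

Lemma risef_neg_nat S k : (0 < k < S)%N -> risef S (- k%:R) = 0.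
Proof.
case/andP=> hk hkS; rewrite /risef (big_cat_nat _ (n := k)) //; last exact: ltnW.
by rewrite (big_ltn hkS) /= addNr mul0r mulr0.
Qed.

(* The hockey-stick identity. *)
Lemma sum_risef S T : (0 < S)%N ->
  \sum_(k < T.+1) risef S k%:R = risef S.+1 T%:R / S%:R.
Proof.
move=> hS; have hS0 : (S%:R : rat) != 0 by rewrite pnatr_eq0 -lt0n.
elim: T => [|T IH]; first by rewrite big_ord1 risefSr //= add0r mulfK.
rewrite big_ord_recr /= IH risefSl // risefSr // -natr1.
by field.
Qed.

Lemma risef_even_centered s y : (0 < s)%N ->
  risef (2 * s) (y - s%:R) = y * \prod_(1 <= j < s) (y ^+ 2 - j%:R ^+ 2).
Proof.
case: s => // s _; elim: s => [|s IH]; first by rewrite /risef big_nat1 big_geq // mulr1 subrK.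
rewrite (_ : (2 * s.+2 = (2 * s.+1).+2)%N); last lia.
rewrite risefSl; last lia.
rewrite risefSr; last lia.
rewrite (_ : y - s.+2%:R + 1 = y - s.+1%:R); last by rewrite -(natr1 s.+1); ring.
by rewrite IH [X in _ = _ * X]big_nat_recr //= natrM; ring.
Qed.

Lemma risef_odd_centered s y :
  risef (2 * s).+1 (y - s%:R - 1 / 2) = \prod_(1 <= j < s.+1) (y ^+ 2 - (odn j)%:R ^+ 2 / 4).
Proof.
elim: s => [|s IH]; first by rewrite risef1 big_geq.
rewrite (_ : ((2 * s.+1).+1 = (2 * s).+3)%N); last lia.
rewrite risefSl // risefSr //.
rewrite (_ : y - s.+1%:R - 1 / 2 + 1 = y - s%:R - 1 / 2); last by rewrite -(natr1 s); field.
rewrite IH [RHS]big_nat_recr //= (_ : odn s.+1 = (2 * s).+1); last by rewrite /odn; lia.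
by rewrite -(natr1 (2 * s)) natrM; field.
Qed.

Lemma sum_nat_multiples (b T : nat) (f : nat -> rat) : (0 < b)%N ->
  (forall i, ~~ (b %| i)%N -> f i = 0) ->
  \sum_(0 <= i < (T * b).+1) f i = \sum_(0 <= k < T.+1) f (k * b)%N.
Proof.
move=> hb hf; elim: T => [|T IH]; first by rewrite mul0n !big_nat1.
rewrite (big_cat_nat _ (n := (T * b).+1)) //=; last by rewrite ltnS mulSn; lia.
rewrite IH [in RHS]big_nat_recr //=; congr (_ + _).
rewrite mulSn addnC big_nat_recr /=; last by lia.
rewrite big_nat_cond big1 ?add0r // => i /andP [/andP [h1 h2] _].
apply: hf; apply/negP => /dvdnP [q hq]; move: h1 h2; rewrite hq => h1 h2.
have : (T < q)%N by rewrite -(ltn_pmul2r hb); lia.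
have : (q < T.+1)%N by rewrite -(ltn_pmul2r hb) mulSn; lia.
lia.
Qed.

(* The coefficient of [q^(t/2)] in [(1 - eps q^(b/2))^-S]. *)
Definition negbin_coef (S : nat) (eps : rat) (b t : nat) : rat :=
  if (b %| t)%N then eps ^+ (t %/ b) * (risef S (t %/ b)%:R / (S.-1)`!%:R) else 0.

Lemma negbin_coefS S eps b t : (0 < b)%N -> (0 < S)%N ->
  \sum_(i < t.+1) (if (b %| i)%N then eps ^+ (i %/ b) else 0) * negbin_coef S eps b (t - i) =
  negbin_coef S.+1 eps b t.
Proof.
move=> hb hS.
rewrite -(big_mkord xpredT
  (fun i => (if (b %| i)%N then eps ^+ (i %/ b) else 0) * negbin_coef S eps b (t - i))).
rewrite {2}/negbin_coef; case: ifP => hdt; last first.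
  rewrite big_nat_cond big1 // => i /andP [/andP [_ hit] _]; rewrite /negbin_coef.
  case: ifP => hi; last by rewrite mul0r.
  case: ifP => hti; last by rewrite mulr0.
  by move: hdt; rewrite -(subnKC (hit : (i <= t)%N)) dvdn_add.
move: hdt => /dvdnP [T ->].
rewrite sum_nat_multiples //; last by move=> i /negbTE ->; rewrite mul0r.
rewrite mulnK // big_nat_cond.
rewrite (eq_bigr (fun k => eps ^+ T * (risef S (T - k)%:R / (S.-1)`!%:R))); last first.
  move=> k /andP [/andP [_ hk] _].
  by rewrite dvdn_mull // mulnK // -mulnBl /negbin_coef dvdn_mull // mulnK // mulrA
    -exprD subnKC.
rewrite -big_nat_cond -mulr_sumr; congr (_ * _).
rewrite -mulr_suml big_nat_rev /=.
rewrite (eq_big_nat _ _ (F2 := fun i => risef S i%:R)); last first.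
  by move=> i hi; congr (risef S _%:R); lia.
rewrite big_mkord sum_risef //.
by case: S hS => // S _ /=; rewrite factS natrM invfM mulrA.
Qed.

Lemma fpow_fgeom_monoE S eps b t : (0 < b)%N -> (0 < S)%N ->
  fpow (fgeom (fmono eps b)) S t = negbin_coef S eps b t.
Proof.
move=> hb; case: S => // S _; elim: S t => [|S IH] t.
  rewrite /fpow /= fmulr1 fgeom_monoE // /negbin_coef.
  by case: ifP => //; rewrite risef1 fact0 mulr1n divr1 ?mulr1.
rewrite /fpow iterS -/(fpow _ S.+1) /fmul -negbin_coefS //.
by apply: eq_bigr => i _; rewrite fgeom_monoE // IH.
Qed.

(** * Double series *)

(* The double series [sum_(n, j >= 1) w n j q^(e n j / 2)]; the truncation of both
   indices at [m + 1] is harmless when [e] satisfies [exponent_bound]. *)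
Definition dseries (w : nat -> nat -> rat) (e : nat -> nat -> nat) : fps :=
  fun m => \sum_(1 <= n < m.+2) \sum_(1 <= j < m.+2) (if e n j == m then w n j else 0).

Definition exponent_bound (e : nat -> nat -> nat) := forall n j, (0 < n)%N -> (0 < j)%N ->
  (n <= (e n j).+1)%N /\ (j <= (e n j).+1)%N.

Lemma dseries_widen w e m N K : exponent_bound e -> (m.+2 <= N)%N -> (m.+2 <= K)%N ->
  \sum_(1 <= n < N) \sum_(1 <= j < K) (if e n j == m then w n j else 0) = dseries w e m.
Proof.
move=> he hN hK; rewrite /dseries (big_cat_nat _ (n := m.+2)) //=.
rewrite [X in _ + X]big_nat_cond [X in _ + X]big1 ?addr0.
  apply: eq_big_nat => n /andP [hn _].
  rewrite (big_cat_nat _ (n := m.+2)) //= [X in _ + X]big_nat_cond [X in _ + X]big1 ?addr0 //.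
  move=> j /andP [/andP [h1 h2] _]; case: eqP => // He.
  by have := he n j hn (leq_trans (isT : (0 < m.+2)%N) h1); lia.
move=> n /andP [/andP [h1 h2] _]; rewrite big_nat_cond big1 // => j /andP [/andP [j1 j2] _].
case: eqP => // He.
by have := he n j (leq_trans (isT : (0 < m.+2)%N) h1) j1; lia.
Qed.

Lemma eq_dseries w w' e e' m :
  (forall n j, (0 < n)%N -> (0 < j)%N -> e n j = e' n j) ->
  (forall n j, (0 < n)%N -> (0 < j)%N -> w n j = w' n j) -> dseries w e m = dseries w' e' m.
Proof.
move=> he hw; apply: eq_big_nat => n /andP [hn _]; apply: eq_big_nat => j /andP [hj _].
by rewrite he // hw.
Qed.

Lemma dseriesC w e m : dseries w e m = dseries (fun n j => w j n) (fun n j => e j n) m.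
Proof. by rewrite /dseries exchange_big_nat. Qed.

Lemma dseriesZ k w e m : k * dseries w e m = dseries (fun n j => k * w n j) e m.
Proof.
rewrite /dseries mulr_sumr; apply: eq_bigr => n _; rewrite mulr_sumr; apply: eq_bigr => j _.
by case: ifP; rewrite ?mulr0.
Qed.

Lemma dseries_sum (a b : nat) (F : nat -> nat -> nat -> rat) e m :
  dseries (fun n j => \sum_(a <= r < b) F r n j) e m = \sum_(a <= r < b) dseries (F r) e m.
Proof.
rewrite /dseries [RHS]exchange_big_nat; apply: eq_bigr => n _; rewrite [RHS]exchange_big_nat.
by apply: eq_bigr => j _; case: ifP => // _; rewrite big1.
Qed.

Lemma fDnE d f m : fDn d f m = (m%:R / 2) ^+ d * f m.
Proof.
elim: d => [|d IH]; first by rewrite expr0 mul1r.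
by rewrite /fDn iterS -/(fDn d f) /fD IH mulrA -exprS.
Qed.

Lemma fDn_dseries d w e m :
  fDn d (dseries w e) m = dseries (fun n j => ((e n j)%:R / 2) ^+ d * w n j) e m.
Proof.
rewrite fDnE /dseries mulr_sumr; apply: eq_bigr => n _; rewrite mulr_sumr; apply: eq_bigr => j _.
by case: eqP => [->|]; rewrite ?mulr0.
Qed.

Lemma fsq_dseries w e m : exponent_bound e ->
  fsq (dseries w e) m = dseries w (fun n j => 2 * e n j)%N m.
Proof.
move=> he; rewrite /fsq; case: ifP => hm.
  rewrite /dseries big1 // => n _; rewrite big1 // => j _.
  by case: eqP => // hnj; move: hm; rewrite -hnj oddM.
have hm2 : m = (2 * m./2)%N by rewrite -{1}(odd_double_half m) hm add0n -mul2n.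
rewrite -(dseries_widen w e m./2 m.+2 m.+2) //; try lia.
rewrite /dseries; apply: eq_bigr => n _; apply: eq_bigr => j _.
by rewrite {2}hm2 eqn_pmul2l.
Qed.

Lemma dseries_shift (d : nat) w w' e e' m : exponent_bound e' ->
  (forall n j, (0 < n)%N -> (0 < j)%N -> e n j = e' n (j + d)%N /\ w n j = w' n (j + d)%N) ->
  (forall n j, (0 < n)%N -> (0 < j <= d)%N -> w' n j = 0) ->
  dseries w e m = dseries w' e' m.
Proof.
move=> he hew hz.
rewrite -(dseries_widen w' e' m m.+2 (m.+2 + d)%N) //; last lia.
rewrite /dseries; apply: eq_big_nat => n /andP [hn _].
rewrite (eq_big_nat _ _ (F2 := fun j => if e' n (j + d)%N == m then w' n (j + d)%N else 0));
  last by move=> j /andP [hj _]; have [-> ->] := hew n j hn hj.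
rewrite [RHS](big_cat_nat _ (n := (1 + d)%N)) //=; try lia.
rewrite [X in _ = X + _]big_nat_cond [X in _ = X + _]big1 ?add0r; last first.
  by move=> j /andP [/andP [h1 h2] _]; rewrite hz ?if_same //; lia.
by rewrite [RHS]big_addn addnK.
Qed.

Lemma lambert_dseries c a b eps S m : (0 < S)%N ->
  (forall n, (0 < n)%N -> (n <= a n)%N) -> (forall n, (0 < n)%N -> (0 < b n)%N) ->
  lambert c a b eps S m =
  dseries (fun n j => c n * (eps ^+ j.-1 * (risef S (j.-1)%:R / (S.-1)`!%:R)))
     (fun n j => a n + j.-1 * b n)%N m.
Proof.
move=> hS ha hb; rewrite /lambert /fsumn /dseries; apply: eq_big_nat => n /andP [hn _].
rewrite fmul_monoE fpow_fgeom_monoE ?hb //.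
set W := fun j => c n * (eps ^+ j.-1 * (risef S (j.-1)%:R / (S.-1)`!%:R)).
rewrite (eq_big_nat _ _ (F2 := fun j => if ((a n <= m) && (b n %| m - a n))%N
   then (if j == ((m - a n) %/ b n).+1 then W j else 0) else 0)); last first.
  move=> j /andP [hj _].
  have -> : (a n + j.-1 * b n == m)%N =
      ((a n <= m) && (b n %| m - a n))%N && (j == ((m - a n) %/ b n).+1).
    case: (leqP (a n) m) => ham /=; last by apply/negbTE/eqP; nia.
    rewrite (_ : (a n + j.-1 * b n == m) = (m - a n == j.-1 * b n))%N;
      last by apply/eqP/eqP; lia.
    by rewrite eqn_mul_divn ?hb //; congr (_ && _); apply/eqP/eqP; lia.
  by rewrite /W; case: ((a n <= m) && _)%N.
rewrite /negbin_coef; case: (leqP (a n) m) => ham /=; last by rewrite big1.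
case: ifP => hd; last by rewrite big1 ?mulr0.
rewrite -big_mkcond big_nat1_eq /= !ltnS (leq_trans (leq_div _ _) (leq_subr _ _)) /W //.
Qed.

Lemma lambert1_dseries c a b eps E m :
  (forall n, (0 < n)%N -> (n <= a n)%N) -> (forall n, (0 < n)%N -> (0 < b n)%N) ->
  (forall n j, (0 < n)%N -> (0 < j)%N -> (a n + j.-1 * b n)%N = E n j) ->
  lambert c a b eps 1 m = dseries (fun n j => c n * eps ^+ j.-1) E m.
Proof.
move=> ha hb hE; rewrite lambert_dseries //; apply: eq_dseries => // n j _ _.
by rewrite risef1 fact0 mulr1n divr1 ?mulr1.
Qed.

(** * Central factorial numbers *)

Lemma coef_Xn_prod_Xsq_eq0 (e K : nat) (c : nat -> rat) (i : nat) :
  let P := ('X ^+ e * \prod_(1 <= j < K.+1) ('X ^+ 2 - (c j)%:P) : {poly rat}) in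
  (odd i != odd e) || (e + 2 * K < i)%N -> P`_i = 0.
Proof.
elim: K i => [|K IH] i /=.
  rewrite big_geq // mulr1 coefXn; case: (eqVneq i e) => [->|_ _]; last by [].
  by rewrite eqxx addn0 ltnn.
rewrite big_nat_recr //= mulrA => hi.
set P := 'X ^+ e * _ in IH *.
rewrite mulrBr coefB coefMC (mulrC P) coefXnM (IH i) ?mul0r ?subr0; last first.
  by case/orP: hi => [->//|hi]; apply/orP; right; lia.
case: ltnP => // hi2; apply: IH; move: hi; rewrite -(subnK hi2) oddD addbF addnK.
by case/orP => [->//|hi]; apply/orP; right; lia.
Qed.

Lemma sum_nat_even_odd (N : nat) (f : nat -> rat) :
  \sum_(0 <= i < 2 * N) f i = \sum_(0 <= k < N) (f (2 * k)%N + f (2 * k).+1).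
Proof.
elim: N => [|N IH]; first by rewrite !big_geq.
rewrite (_ : (2 * N.+1 = (2 * N).+2)%N); last lia.
by rewrite big_nat_recr //= big_nat_recr //= IH big_nat_recr //= addrA.
Qed.

Lemma tce_eq0 s r : (0 < s < r)%N -> tce s r = 0.
Proof.
case: s => // s /= hr; apply: (coef_Xn_prod_Xsq_eq0 2 s (fun j => j%:R ^+ 2)).
by apply/orP; right; lia.
Qed.

Lemma tco_eq0 s r : (s < r)%N -> tco s r = 0.
Proof.
move=> hr; apply: (coef_Xn_prod_Xsq_eq0 1 s (fun j => (odn j)%:R ^+ 2 / 4)).
by apply/orP; right; lia.
Qed.

Lemma risef_even_tce s y : (0 < s)%N -> y != 0 ->
  risef (2 * s) (y - s%:R) = \sum_(1 <= r < s.+1) tce s r * y ^+ (2 * r).-1.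
Proof.
case: s => // s _ hy.
set P := (('X : {poly rat}) ^+ 2 * \prod_(1 <= j < s.+1) ('X ^+ 2 - (j%:R ^+ 2)%:P)).
have hP0 i : (odd i != odd 2) || (2 + 2 * s < i)%N -> P`_i = 0.
  exact: (coef_Xn_prod_Xsq_eq0 2 s (fun j => j%:R ^+ 2)).
have hPy : P.[y] = y * risef (2 * s.+1) (y - s.+1%:R).
  rewrite risef_even_centered // /P hornerM hornerXn horner_prod mulrA -expr2; congr (_ * _).
  by apply: eq_bigr => j _; rewrite hornerD hornerN hornerXn hornerC.
have hsz : (size P <= 2 * s.+2)%N by apply/leq_sizeP => i hi; apply: hP0; lia.
have := horner_coef_wide y hsz.
rewrite -(big_mkord xpredT (fun i => P`_i * y ^+ i)) sum_nat_even_odd hPy.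
rewrite (eq_bigr (fun k => tce s.+1 k * y ^+ (2 * k))); last first.
  by move=> k _; rewrite (hP0 (2 * k).+1) ?mul0r ?addr0 //= oddM.
rewrite big_ltn // (_ : tce s.+1 0 = 0) ?mul0r ?add0r; last by rewrite /tce coefXnM.
have -> : \sum_(1 <= i < s.+2) tce s.+1 i * y ^+ (2 * i) =
   y * \sum_(1 <= i < s.+2) tce s.+1 i * y ^+ (2 * i).-1.
  rewrite mulr_sumr; apply: eq_big_nat => i /andP [hi _].
  by rewrite -[in LHS](@prednK (2 * i)) ?exprS 1?mulrCA //; lia.
by move/(mulfI hy).
Qed.

Lemma risef_odd_tco s y : y != 0 ->
  risef (2 * s).+1 (y - s%:R - 1 / 2) = \sum_(0 <= r < s.+1) tco s r * y ^+ (2 * r).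
Proof.
move=> hy.
set P := (('X : {poly rat}) ^+ 1 * \prod_(1 <= j < s.+1) ('X ^+ 2 - ((odn j)%:R ^+ 2 / 4)%:P)).
have hP0 i : (odd i != odd 1) || (1 + 2 * s < i)%N -> P`_i = 0.
  exact: (coef_Xn_prod_Xsq_eq0 1 s (fun j => (odn j)%:R ^+ 2 / 4)).
have hPy : P.[y] = y * risef (2 * s).+1 (y - s%:R - 1 / 2).
  rewrite risef_odd_centered // /P hornerM hornerXn expr1 horner_prod; congr (_ * _).
  by apply: eq_bigr => j _; rewrite hornerD hornerN hornerXn hornerC.
have hsz : (size P <= 2 * s.+1)%N by apply/leq_sizeP => i hi; apply: hP0; lia.
have := horner_coef_wide y hsz.
rewrite -(big_mkord xpredT (fun i => P`_i * y ^+ i)) sum_nat_even_odd hPy.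
rewrite (eq_bigr (fun k => y * (tco s k * y ^+ (2 * k)))); last first.
  by move=> k _; rewrite (hP0 (2 * k)) ?oddM // mul0r add0r exprS mulrCA /tco.
by rewrite -mulr_sumr => /(mulfI hy).
Qed.

(** * Expansion of the left-hand sides *)

Lemma sum_nat_split_support (a c0 s : nat) (F : nat -> rat) : (a <= c0)%N ->
  (forall r, (s < r)%N -> F r = 0) ->
  \sum_(a <= r < s.+1) F r = \sum_(a <= r < c0) F r + \sum_(c0 <= r < s.+1) F r.
Proof.
move=> hac hF; case: (leqP c0 s.+1) => h; first by rewrite -big_cat_nat.
rewrite [X in _ = _ + X]big_geq ?addr0; last lia.
case: (leqP a s.+1) => h2; last first.
  rewrite big_geq; last lia.
  by rewrite big_nat_cond big1 // => r /andP [/andP [h3 _] _]; apply: hF; lia.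
rewrite [RHS](big_cat_nat _ (n := s.+1)) //=; last lia.
rewrite [X in _ = _ + X]big_nat_cond [X in _ = _ + X]big1 ?addr0 //.
by move=> r /andP [/andP [h3 h4] _]; apply: hF.
Qed.

(* The shift [J = j + s - 1] is exact because [risef (2s) (J - s)] vanishes for [0 < J < s]. *)
Lemma lambert_even_dseries c eps g a b s m : (0 < s)%N ->
  (forall n, a n = g n * (2 * s))%N -> (forall n, b n = 2 * g n)%N ->
  (forall n, (0 < n)%N -> (n <= g n)%N) ->
  ((2 * s).-1)`!%:R * eps ^+ s.-1 * lambert c a b eps (2 * s) m =
  dseries (fun n J => c n * eps ^+ J.-1 * risef (2 * s) (J%:R - s%:R))
    (fun n J => 2 * g n * J)%N m.
Proof.
move=> hs ha hb hg.
rewrite lambert_dseries; first last.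
- by move=> n hn; rewrite hb; have := hg n hn; lia.
- by move=> n hn; rewrite ha; have := hg n hn; nia.
- lia.
rewrite dseriesZ; apply: (dseries_shift s.-1).
- by move=> n j hn hj; have := hg n hn; split; nia.
- move=> n [//|j] hn _; split; first by rewrite ha hb; nia.
  case: s hs {ha} => // s _.
  rewrite (_ : (j.+1 + s)%:R - s.+1%:R = j%:R :> rat); last by rewrite -!natr1 natrD; ring.
  rewrite (_ : j.+1.-1 = j) // (_ : s.+1.-1 = s) // (_ : (j.+1 + s).-1 = j + s)%N // exprD.
  have hf : ((2 * s.+1).-1)`!%:R != 0 :> rat by rewrite pnatr_eq0 -lt0n fact_gt0.
  by field.
- move=> n j hn /andP [hj hjs].
  rewrite (_ : j%:R - s%:R = - (s - j)%N%:R :> rat); last by rewrite natrB ?opprB //; lia.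
  by rewrite risef_neg_nat ?mulr0 //; lia.
Qed.

Lemma lambert_odd_dseries c eps g a b s m :
  (forall n, a n = g n * (2 * s).+1)%N -> (forall n, b n = 2 * g n)%N ->
  (forall n, (0 < n)%N -> (n <= g n)%N) ->
  (2 * s)`!%:R * eps ^+ s * lambert c a b eps (2 * s).+1 m =
  dseries (fun n J => c n * eps ^+ J.-1 * risef (2 * s).+1 ((odn J)%:R / 2 - s%:R - 1 / 2))
    (fun n J => g n * odn J)%N m.
Proof.
move=> ha hb hg.
rewrite lambert_dseries //; first last.
- by move=> n hn; rewrite hb; have := hg n hn; lia.
- by move=> n hn; rewrite ha; have := hg n hn; nia.
rewrite dseriesZ; apply: (dseries_shift s).
- by move=> n j hn hj; have := hg n hn; rewrite /odn; split; nia.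
- move=> n [//|j] hn _; split; first by rewrite ha hb /odn; nia.
  rewrite (_ : (odn (j.+1 + s))%:R / 2 - s%:R - 1 / 2 = j%:R :> rat); last first.
    rewrite (_ : odn (j.+1 + s) = (2 * (j + s)).+1); last by rewrite /odn; lia.
    by rewrite -natr1 natrM natrD; field.
  rewrite (_ : j.+1.-1 = j) // (_ : (j.+1 + s).-1 = j + s)%N // exprD.
  have hf : ((2 * s)`!)%:R != 0 :> rat by rewrite pnatr_eq0 -lt0n fact_gt0.
  by field.
- move=> n j hn /andP [hj hjs].
  rewrite (_ : (odn j)%:R / 2 - s%:R - 1 / 2 = - (s.+1 - j)%N%:R :> rat); last first.
    rewrite (_ : odn j = (2 * j.-1).+1); last by rewrite /odn; lia.
    rewrite natrB; last lia.
    rewrite -natr1 natrM -(natr1 s) (_ : j%:R = j.-1%:R + 1 :> rat); last by rewrite natr1 prednK.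
    by field.
  by rewrite risef_neg_nat ?mulr0 //; lia.
Qed.

Lemma lambert_even_tce c eps g a b s m c0 : (0 < s)%N -> (1 <= c0)%N ->
  (forall n, a n = g n * (2 * s))%N -> (forall n, b n = 2 * g n)%N ->
  (forall n, (0 < n)%N -> (n <= g n)%N) ->
  ((2 * s).-1)`!%:R * eps ^+ s.-1 * lambert c a b eps (2 * s) m =
  \sum_(1 <= r < c0) tce s r *
    dseries (fun n J => c n * eps ^+ J.-1 * J%:R ^+ (2 * r).-1) (fun n J => 2 * g n * J)%N m +
  \sum_(c0 <= r < s.+1) tce s r *
    dseries (fun n J => c n * eps ^+ J.-1 * J%:R ^+ (2 * r).-1) (fun n J => 2 * g n * J)%N m.
Proof.
move=> hs hc ha hb hg; rewrite (lambert_even_dseries _ _ g) //.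
rewrite -sum_nat_split_support // => [|r hr]; last by rewrite tce_eq0 ?mul0r ?hs.
under eq_bigr => r _ do rewrite dseriesZ.
rewrite -dseries_sum; apply: eq_dseries => // n J _ hJ.
rewrite risef_even_tce ?pnatr_eq0 -?lt0n // mulr_sumr.
by apply: eq_bigr => r _; rewrite mulrCA.
Qed.

Lemma lambert_odd_tco c eps g a b s m c0 :
  (forall n, a n = g n * (2 * s).+1)%N -> (forall n, b n = 2 * g n)%N ->
  (forall n, (0 < n)%N -> (n <= g n)%N) ->
  (2 * s)`!%:R * eps ^+ s * lambert c a b eps (2 * s).+1 m =
  \sum_(0 <= r < c0) tco s r *
    dseries (fun n J => c n * eps ^+ J.-1 * ((odn J)%:R / 2) ^+ (2 * r))
      (fun n J => g n * odn J)%N m +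
  \sum_(c0 <= r < s.+1) tco s r *
    dseries (fun n J => c n * eps ^+ J.-1 * ((odn J)%:R / 2) ^+ (2 * r))
      (fun n J => g n * odn J)%N m.
Proof.
move=> ha hb hg; rewrite (lambert_odd_dseries _ _ g) //.
rewrite -sum_nat_split_support // => [|r hr]; last by rewrite tco_eq0 ?mul0r.
under eq_bigr => r _ do rewrite dseriesZ.
rewrite -dseries_sum; apply: eq_dseries => // n J _ hJ.
rewrite risef_odd_tco; last by rewrite mulf_neq0 ?invr_eq0 // pnatr_eq0 /odn; lia.
by rewrite mulr_sumr; apply: eq_bigr => r _; rewrite mulrCA.
Qed.

(** * The operator D on Lambert series *)

Lemma fDn_lambert1 d c a b eps E m :
  (forall n, (0 < n)%N -> (n <= a n)%N) -> (forall n, (0 < n)%N -> (0 < b n)%N) ->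
  (forall n j, (0 < n)%N -> (0 < j)%N -> (a n + j.-1 * b n)%N = E n j) ->
  fDn d (lambert c a b eps 1) m =
  dseries (fun n j => ((E n j)%:R / 2) ^+ d * (c n * eps ^+ j.-1)) E m.
Proof. by move=> ha hb hE; rewrite fDnE (lambert1_dseries _ _ _ _ E) // -fDnE fDn_dseries. Qed.

Lemma fDn_lambert_ABLM d c eps m :
  fDn d (lambert c (fun n => 2 * n)%N (fun n => 2 * n)%N eps 1) m =
  dseries (fun n j => (n%:R * j%:R) ^+ d * (c n * eps ^+ j.-1)) (fun n j => 2 * n * j)%N m.
Proof.
rewrite (fDn_lambert1 _ _ _ _ _ (fun n j => 2 * n * j)%N); try by move=> *; nia.
by apply: eq_dseries => // n j _ _; congr (_ ^+ _ * _); rewrite !natrM; field.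
Qed.

Lemma fsq_fDn_lambert_ABLM d c eps m :
  fsq (fDn d (lambert c (fun n => 2 * n)%N (fun n => 2 * n)%N eps 1)) m =
  dseries (fun n j => (n%:R * j%:R) ^+ d * (c n * eps ^+ j.-1)) (fun n j => 2 * (2 * n * j))%N m.
Proof.
rewrite /fsq fDn_lambert_ABLM -/(fsq (dseries _ _) m).
by rewrite fsq_dseries // => n j hn hj; split; nia.
Qed.

Lemma fDn_lambert_CDNP d c eps m :
  fDn d (lambert c (fun n => 2 * n)%N (fun n => 4 * n)%N eps 1) m =
  dseries (fun n j => (n%:R * (odn j)%:R) ^+ d * (c n * eps ^+ j.-1))
    (fun n j => 2 * n * odn j)%N m.
Proof.
rewrite (fDn_lambert1 _ _ _ _ _ (fun n j => 2 * n * odn j)%N); try by move=> *; rewrite ?/odn; nia.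
by apply: eq_dseries => // n j _ _; congr (_ ^+ _ * _); rewrite !natrM; field.
Qed.

Lemma fDn_lambert_FGQR d c eps m :
  fDn d (lambert c (fun n => 2 * odn n)%N (fun n => 2 * odn n)%N eps 1) m =
  dseries (fun n j => ((odn n)%:R * j%:R) ^+ d * (c n * eps ^+ j.-1))
    (fun n j => 2 * odn n * j)%N m.
Proof.
rewrite (fDn_lambert1 _ _ _ _ _ (fun n j => 2 * odn n * j)%N); try by move=> *; rewrite ?/odn; nia.
by apply: eq_dseries => // n j _ _; congr (_ ^+ _ * _); rewrite !natrM; field.
Qed.

Lemma fDn_lambert_HJTU d c eps m :
  fDn d (lambert c (fun n => odn n)%N (fun n => 2 * odn n)%N eps 1) m =
  dseries (fun n j => ((odn n)%:R * (odn j)%:R / 2) ^+ d * (c n * eps ^+ j.-1))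
    (fun n j => odn n * odn j)%N m.
Proof.
rewrite (fDn_lambert1 _ _ _ _ _ (fun n j => odn n * odn j)%N); try by move=> *; rewrite ?/odn; nia.
by apply: eq_dseries => // n j _ _; rewrite !natrM.
Qed.

Lemma exprD_eq (x : rat) {n a b : nat} : n = (a + b)%N -> x ^+ n = x ^+ a * x ^+ b.
Proof. by move->; rewrite exprD. Qed.

Lemma leq_odn n : (0 < n)%N -> (n <= odn n)%N.
Proof. by rewrite /odn; lia. Qed.

Lemma serI_even s p m : (0 < s)%N ->
  ((2 * s).-1)`!%:R * serI (2 * s) (2 * p) m =
     \sum_(1 <= r < p.+1) tce s r * fsq (fDn (2 * r).-1 (serA (2 * p - 2 * r).+1)) m
   + \sum_(p.+1 <= r < s.+1) tce s r * fsq (fDn (2 * p) (serA (2 * r - 2 * p).-1)) m.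
Proof.
move=> hs; have := lambert_even_tce (fun n => n%:R ^+ (2 * p)) 1 (fun n => 2 * n)%N
  _ (fun n => 4 * n)%N s m p.+1 hs (ltn0Sn p)
  (fun=> erefl) (fun n => esym (mulnA 2 2 n)) (fun n _ => leq_pmull n (ltn0Sn 1)).
rewrite expr1n mulr1 => ->.
congr (_ + _); apply: eq_big_nat => r /andP [hr1 hr2]; congr (_ * _).
- rewrite /serA fsq_fDn_lambert_ABLM; apply: eq_dseries => n J _ _; first nia.
  rewrite !expr1n !mulr1 exprMn.
  rewrite (exprD_eq n%:R (_ : 2 * p = (2 * r).-1 + (2 * p - 2 * r).+1)%N); [ring | lia].
- rewrite /serA fsq_fDn_lambert_ABLM [RHS]dseriesC; apply: eq_dseries => n J _ _; first nia.
  rewrite !expr1n !mulr1 exprMn.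
  rewrite (exprD_eq J%:R (_ : (2 * r).-1 = 2 * p + (2 * r - 2 * p).-1)%N); [ring | lia].
Qed.

Lemma serI_odd s p m :
  (2 * s)`!%:R * serI (2 * s).+1 (2 * p).+1 m =
     \sum_(0 <= r < p.+1) 2 ^- (2 * r) * tco s r * fDn (2 * r) (serC (2 * p - 2 * r).+1) m
   + \sum_(p.+1 <= r < s.+1) 2 ^- (2 * r) * tco s r * fDn (2 * p).+1 (serF (2 * r - 2 * p).-1) m.
Proof.
have := lambert_odd_tco (fun n => n%:R ^+ (2 * p).+1) 1 (fun n => 2 * n)%N
  _ (fun n => 4 * n)%N s m p.+1
  (fun=> erefl) (fun n => esym (mulnA 2 2 n)) (fun n _ => leq_pmull n (ltn0Sn 1)).
rewrite expr1n mulr1 => ->.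
congr (_ + _); apply: eq_big_nat => r /andP [hr1 hr2]; rewrite -mulrA mulrCA; congr (_ * _).
- rewrite /serC fDn_lambert_CDNP dseriesZ; apply: eq_dseries => // n J _ _.
  rewrite !expr1n !mulr1 expr_div_n exprMn.
  rewrite (exprD_eq n%:R (_ : (2 * p).+1 = 2 * r + (2 * p - 2 * r).+1)%N); [ring | lia].
- rewrite /serF fDn_lambert_FGQR dseriesZ [RHS]dseriesC; apply: eq_dseries => n J _ _; first nia.
  rewrite !expr1n !mulr1 expr_div_n exprMn.
  rewrite (exprD_eq (odn J)%:R (_ : 2 * r = (2 * p).+1 + (2 * r - 2 * p).-1)%N); [ring | lia].
Qed.

Lemma serII_even s p m : (0 < s)%N ->
  ((2 * s).-1)`!%:R * (-1) ^+ s.-1 * serII (2 * s) (2 * p) m =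
     \sum_(1 <= r < p.+1) tce s r * fsq (fDn (2 * r).-1 (serL (2 * p - 2 * r).+1)) m
   + \sum_(p.+1 <= r < s.+1) tce s r * fsq (fDn (2 * p) (serB (2 * r - 2 * p).-1)) m.
Proof.
move=> hs; have -> := lambert_even_tce (fun n => n%:R ^+ (2 * p)) (-1) (fun n => 2 * n)%N
  _ (fun n => 4 * n)%N s m p.+1 hs (ltn0Sn p)
  (fun=> erefl) (fun n => esym (mulnA 2 2 n)) (fun n _ => leq_pmull n (ltn0Sn 1)).
congr (_ + _); apply: eq_big_nat => r /andP [hr1 hr2]; congr (_ * _).
- rewrite /serL fsq_fDn_lambert_ABLM; apply: eq_dseries => n J _ _; first nia.
  rewrite exprMn.
  rewrite (exprD_eq n%:R (_ : 2 * p = (2 * r).-1 + (2 * p - 2 * r).+1)%N); [ring | lia].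
- rewrite /serB fsq_fDn_lambert_ABLM [RHS]dseriesC; apply: eq_dseries => n J _ _; first nia.
  rewrite /sgn expr1n mulr1 exprMn.
  rewrite (exprD_eq J%:R (_ : (2 * r).-1 = 2 * p + (2 * r - 2 * p).-1)%N); [ring | lia].
Qed.

Lemma serII_odd s p m :
  (2 * s)`!%:R * (-1) ^+ s * serII (2 * s).+1 (2 * p) m =
     \sum_(0 <= r < p) 2 ^- (2 * r) * tco s r * fDn (2 * r) (serN (2 * p - 2 * r)) m
   + \sum_(p <= r < s.+1) 2 ^- (2 * r) * tco s r * fDn (2 * p) (serG (2 * r - 2 * p)) m.
Proof.
have -> := lambert_odd_tco (fun n => n%:R ^+ (2 * p)) (-1) (fun n => 2 * n)%N
  _ (fun n => 4 * n)%N s m p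
  (fun=> erefl) (fun n => esym (mulnA 2 2 n)) (fun n _ => leq_pmull n (ltn0Sn 1)).
congr (_ + _); apply: eq_big_nat => r /andP [hr1 hr2]; rewrite -mulrA mulrCA; congr (_ * _).
- rewrite /serN fDn_lambert_CDNP dseriesZ; apply: eq_dseries => // n J _ _.
  rewrite expr_div_n exprMn.
  rewrite (exprD_eq n%:R (_ : 2 * p = 2 * r + (2 * p - 2 * r))%N); [ring | lia].
- rewrite /serG fDn_lambert_FGQR dseriesZ [RHS]dseriesC; apply: eq_dseries => n J _ _; first nia.
  rewrite /sgn expr1n mulr1 expr_div_n exprMn.
  rewrite (exprD_eq (odn J)%:R (_ : 2 * r = 2 * p + (2 * r - 2 * p))%N); [ring | lia].
Qed.

Lemma serIII_even s p m : (0 < s)%N ->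
  ((2 * s).-1)`!%:R * serIII (2 * s) (2 * p) m =
     \sum_(1 <= r < p.+1) tce s r * fDn (2 * r).-1 (serF (2 * p - 2 * r).+1) m
   + \sum_(p.+1 <= r < s.+1) tce s r * fDn (2 * p) (serC (2 * r - 2 * p).-1) m.
Proof.
move=> hs; have := lambert_even_tce (fun n => (odn n)%:R ^+ (2 * p)) 1 odn
  _ (fun n => 2 * odn n)%N s m p.+1 hs (ltn0Sn p)
  (fun=> erefl) (fun=> erefl) leq_odn.
rewrite expr1n mulr1 => ->.
congr (_ + _); apply: eq_big_nat => r /andP [hr1 hr2]; congr (_ * _).
- rewrite /serF fDn_lambert_FGQR; apply: eq_dseries => n J _ _; first nia.
  rewrite !expr1n !mulr1 exprMn.
  rewrite (exprD_eq (odn n)%:R (_ : 2 * p = (2 * r).-1 + (2 * p - 2 * r).+1)%N); [ring | lia].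
- rewrite /serC fDn_lambert_CDNP [RHS]dseriesC; apply: eq_dseries => n J _ _; first nia.
  rewrite !expr1n !mulr1 exprMn.
  rewrite (exprD_eq J%:R (_ : (2 * r).-1 = 2 * p + (2 * r - 2 * p).-1)%N); [ring | lia].
Qed.

Lemma serIII_odd s p m :
  (2 * s)`!%:R * serIII (2 * s).+1 (2 * p).+1 m =
     \sum_(0 <= r < p.+1) tco s r * fDn (2 * r) (serH (2 * p - 2 * r).+1) m
   + \sum_(p.+1 <= r < s.+1) 2 ^- (2 * r - 2 * p - 1) * tco s r *
       fDn (2 * p).+1 (serH (2 * r - 2 * p).-1) m.
Proof.
have := lambert_odd_tco (fun n => (odn n)%:R ^+ (2 * p).+1) 1 odn
  _ (fun n => 2 * odn n)%N s m p.+1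
  (fun=> erefl) (fun=> erefl) leq_odn.
rewrite expr1n mulr1 => ->.
congr (_ + _); apply: eq_big_nat => r /andP [hr1 hr2].
- congr (_ * _); rewrite /serH fDn_lambert_HJTU; apply: eq_dseries => // n J _ _.
  rewrite !expr1n !mulr1 !expr_div_n exprMn.
  rewrite (exprD_eq (odn n)%:R (_ : (2 * p).+1 = 2 * r + (2 * p - 2 * r).+1)%N); [ring | lia].
- rewrite -mulrA mulrCA; congr (_ * _).
  rewrite /serH fDn_lambert_HJTU dseriesZ [RHS]dseriesC; apply: eq_dseries => n J _ _; first nia.
  rewrite !expr1n !mulr1 !expr_div_n exprMn.
  rewrite (_ : 2 * r - 2 * p - 1 = (2 * r - 2 * p).-1)%N; last lia.
  rewrite (exprD_eq (odn J)%:R (_ : 2 * r = (2 * p).+1 + (2 * r - 2 * p).-1)%N); last lia.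
  rewrite (exprD_eq (2 : rat) (_ : 2 * r = (2 * p).+1 + (2 * r - 2 * p).-1)%N) ?invfM; [ring | lia].
Qed.

Lemma serIV_even s p m : (0 < s)%N ->
  ((2 * s).-1)`!%:R * (-1) ^+ s.-1 * serIV (2 * s) (2 * p) m =
     \sum_(1 <= r < p.+1) tce s r * fDn (2 * r).-1 (serQ (2 * p - 2 * r).+1) m
   + \sum_(p.+1 <= r < s.+1) tce s r * fDn (2 * p) (serD (2 * r - 2 * p).-1) m.
Proof.
move=> hs; have -> := lambert_even_tce (fun n => (odn n)%:R ^+ (2 * p)) (-1) odn
  _ (fun n => 2 * odn n)%N s m p.+1 hs (ltn0Sn p)
  (fun=> erefl) (fun=> erefl) leq_odn.
congr (_ + _); apply: eq_big_nat => r /andP [hr1 hr2]; congr (_ * _).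
- rewrite /serQ fDn_lambert_FGQR; apply: eq_dseries => n J _ _; first nia.
  rewrite exprMn.
  rewrite (exprD_eq (odn n)%:R (_ : 2 * p = (2 * r).-1 + (2 * p - 2 * r).+1)%N); [ring | lia].
- rewrite /serD fDn_lambert_CDNP [RHS]dseriesC; apply: eq_dseries => n J _ _; first nia.
  rewrite /sgn expr1n mulr1 exprMn.
  rewrite (exprD_eq J%:R (_ : (2 * r).-1 = 2 * p + (2 * r - 2 * p).-1)%N); [ring | lia].
Qed.

Lemma serIV_odd s p m :
  (2 * s)`!%:R * (-1) ^+ s * serIV (2 * s).+1 (2 * p) m =
     \sum_(0 <= r < p) tco s r * fDn (2 * r) (serT (2 * p - 2 * r)) m
   + \sum_(p <= r < s.+1) 2 ^- (2 * r - 2 * p) * tco s r * fDn (2 * p) (serJ (2 * r - 2 * p)) m.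
Proof.
have -> := lambert_odd_tco (fun n => (odn n)%:R ^+ (2 * p)) (-1) odn
  _ (fun n => 2 * odn n)%N s m p
  (fun=> erefl) (fun=> erefl) leq_odn.
congr (_ + _); apply: eq_big_nat => r /andP [hr1 hr2].
- congr (_ * _); rewrite /serT fDn_lambert_HJTU; apply: eq_dseries => // n J _ _.
  rewrite !expr_div_n exprMn.
  rewrite (exprD_eq (odn n)%:R (_ : 2 * p = 2 * r + (2 * p - 2 * r))%N); [ring | lia].
- rewrite -mulrA mulrCA; congr (_ * _).
  rewrite /serJ fDn_lambert_HJTU dseriesZ [RHS]dseriesC; apply: eq_dseries => n J _ _; first nia.
  rewrite /sgn expr1n mulr1 !expr_div_n exprMn.
  rewrite (exprD_eq (odn J)%:R (_ : 2 * r = 2 * p + (2 * r - 2 * p))%N); last lia.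
  rewrite (exprD_eq (2 : rat) (_ : 2 * r = 2 * p + (2 * r - 2 * p))%N) ?invfM; [ring | lia].
Qed.

Lemma serV_even s p m : (0 < s)%N ->
  ((2 * s).-1)`!%:R * serV (2 * s) (2 * p) m =
     \sum_(1 <= r < p.+1) tce s r * fsq (fDn (2 * r).-1 (serB (2 * p - 2 * r).+1)) m
   + \sum_(p.+1 <= r < s.+1) tce s r * fsq (fDn (2 * p) (serL (2 * r - 2 * p).-1)) m.
Proof.
move=> hs; have := lambert_even_tce (fun n => sgn n * n%:R ^+ (2 * p)) 1 (fun n => 2 * n)%N
  _ (fun n => 4 * n)%N s m p.+1 hs (ltn0Sn p)
  (fun=> erefl) (fun n => esym (mulnA 2 2 n)) (fun n _ => leq_pmull n (ltn0Sn 1)).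
rewrite expr1n mulr1 => ->.
congr (_ + _); apply: eq_big_nat => r /andP [hr1 hr2]; congr (_ * _).
- rewrite /serB fsq_fDn_lambert_ABLM; apply: eq_dseries => n J _ _; first nia.
  rewrite !expr1n !mulr1 exprMn.
  rewrite (exprD_eq n%:R (_ : 2 * p = (2 * r).-1 + (2 * p - 2 * r).+1)%N); [ring | lia].
- rewrite /serL fsq_fDn_lambert_ABLM [RHS]dseriesC; apply: eq_dseries => n J _ _; first nia.
  rewrite /sgn !expr1n !mulr1 exprMn.
  rewrite (exprD_eq J%:R (_ : (2 * r).-1 = 2 * p + (2 * r - 2 * p).-1)%N); [ring | lia].
Qed.

Lemma serV_odd s p m :
  (2 * s)`!%:R * serV (2 * s).+1 (2 * p).+1 m =
     \sum_(0 <= r < p.+1) 2 ^- (2 * r) * tco s r * fDn (2 * r) (serD (2 * p - 2 * r).+1) m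
   + \sum_(p.+1 <= r < s.+1) 2 ^- (2 * r) * tco s r * fDn (2 * p).+1 (serQ (2 * r - 2 * p).-1) m.
Proof.
have := lambert_odd_tco (fun n => sgn n * n%:R ^+ (2 * p).+1) 1 (fun n => 2 * n)%N
  _ (fun n => 4 * n)%N s m p.+1
  (fun=> erefl) (fun n => esym (mulnA 2 2 n)) (fun n _ => leq_pmull n (ltn0Sn 1)).
rewrite expr1n mulr1 => ->.
congr (_ + _); apply: eq_big_nat => r /andP [hr1 hr2]; rewrite -mulrA mulrCA; congr (_ * _).
- rewrite /serD fDn_lambert_CDNP dseriesZ; apply: eq_dseries => // n J _ _.
  rewrite !expr1n !mulr1 expr_div_n exprMn.
  rewrite (exprD_eq n%:R (_ : (2 * p).+1 = 2 * r + (2 * p - 2 * r).+1)%N); [ring | lia].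
- rewrite /serQ fDn_lambert_FGQR dseriesZ [RHS]dseriesC; apply: eq_dseries => n J _ _; first nia.
  rewrite /sgn !expr1n !mulr1 expr_div_n exprMn.
  rewrite (exprD_eq (odn J)%:R (_ : 2 * r = (2 * p).+1 + (2 * r - 2 * p).-1)%N); [ring | lia].
Qed.

Lemma serVI_even s p m : (0 < s)%N ->
  ((2 * s).-1)`!%:R * (-1) ^+ s.-1 * serVI (2 * s) (2 * p) m =
     \sum_(1 <= r < p.+1) tce s r * fsq (fDn (2 * r).-1 (serM (2 * p - 2 * r).+1)) m
   + \sum_(p.+1 <= r < s.+1) tce s r * fsq (fDn (2 * p) (serM (2 * r - 2 * p).-1)) m.
Proof.
move=> hs; have -> := lambert_even_tce (fun n => sgn n * n%:R ^+ (2 * p)) (-1) (fun n => 2 * n)%N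
  _ (fun n => 4 * n)%N s m p.+1 hs (ltn0Sn p)
  (fun=> erefl) (fun n => esym (mulnA 2 2 n)) (fun n _ => leq_pmull n (ltn0Sn 1)).
congr (_ + _); apply: eq_big_nat => r /andP [hr1 hr2]; congr (_ * _).
- rewrite /serM fsq_fDn_lambert_ABLM; apply: eq_dseries => n J _ _; first nia.
  rewrite exprMn.
  rewrite (exprD_eq n%:R (_ : 2 * p = (2 * r).-1 + (2 * p - 2 * r).+1)%N); [ring | lia].
- rewrite /serM fsq_fDn_lambert_ABLM [RHS]dseriesC; apply: eq_dseries => n J _ _; first nia.
  rewrite /sgn exprMn.
  rewrite (exprD_eq J%:R (_ : (2 * r).-1 = 2 * p + (2 * r - 2 * p).-1)%N); [ring | lia].
Qed.

Lemma serVI_odd s p m :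
  (2 * s)`!%:R * (-1) ^+ s * serVI (2 * s).+1 (2 * p) m =
     \sum_(0 <= r < p) 2 ^- (2 * r) * tco s r * fDn (2 * r) (serP (2 * p - 2 * r)) m
   + \sum_(p <= r < s.+1) 2 ^- (2 * r) * tco s r * fDn (2 * p) (serR (2 * r - 2 * p)) m.
Proof.
have -> := lambert_odd_tco (fun n => sgn n * n%:R ^+ (2 * p)) (-1) (fun n => 2 * n)%N
  _ (fun n => 4 * n)%N s m p
  (fun=> erefl) (fun n => esym (mulnA 2 2 n)) (fun n _ => leq_pmull n (ltn0Sn 1)).
congr (_ + _); apply: eq_big_nat => r /andP [hr1 hr2]; rewrite -mulrA mulrCA; congr (_ * _).
- rewrite /serP fDn_lambert_CDNP dseriesZ; apply: eq_dseries => // n J _ _.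
  rewrite expr_div_n exprMn.
  rewrite (exprD_eq n%:R (_ : 2 * p = 2 * r + (2 * p - 2 * r))%N); [ring | lia].
- rewrite /serR fDn_lambert_FGQR dseriesZ [RHS]dseriesC; apply: eq_dseries => n J _ _; first nia.
  rewrite /sgn expr_div_n exprMn.
  rewrite (exprD_eq (odn J)%:R (_ : 2 * r = 2 * p + (2 * r - 2 * p))%N); [ring | lia].
Qed.

Lemma serVII_even s p m : (0 < s)%N ->
  ((2 * s).-1)`!%:R * serVII (2 * s) (2 * p).+1 m =
     \sum_(1 <= r < p.+1) tce s r * fDn (2 * r).-1 (serG (2 * p - 2 * r).+2) m
   + \sum_(p.+1 <= r < s.+1) tce s r * fDn (2 * p).+1 (serN (2 * r - 2 * p).-2) m.
Proof.
move=> hs; have := lambert_even_tce (fun n => sgn n * (odn n)%:R ^+ (2 * p).+1) 1 odn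
  _ (fun n => 2 * odn n)%N s m p.+1 hs (ltn0Sn p)
  (fun=> erefl) (fun=> erefl) leq_odn.
rewrite expr1n mulr1 => ->.
congr (_ + _); apply: eq_big_nat => r /andP [hr1 hr2]; congr (_ * _).
- rewrite /serG fDn_lambert_FGQR; apply: eq_dseries => n J _ _; first nia.
  rewrite !expr1n !mulr1 exprMn.
  rewrite (exprD_eq (odn n)%:R (_ : (2 * p).+1 = (2 * r).-1 + (2 * p - 2 * r).+2)%N); [ring | lia].
- rewrite /serN fDn_lambert_CDNP [RHS]dseriesC; apply: eq_dseries => n J _ _; first nia.
  rewrite /sgn !expr1n !mulr1 exprMn.
  rewrite (exprD_eq J%:R (_ : (2 * r).-1 = (2 * p).+1 + (2 * r - 2 * p).-2)%N); [ring | lia].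
Qed.

Lemma serVII_odd s p m :
  (2 * s)`!%:R * serVII (2 * s).+1 (2 * p) m =
     \sum_(0 <= r < p) tco s r * fDn (2 * r) (serJ (2 * p - 2 * r)) m
   + \sum_(p <= r < s.+1) 2 ^- (2 * r - 2 * p) * tco s r * fDn (2 * p) (serT (2 * r - 2 * p)) m.
Proof.
have := lambert_odd_tco (fun n => sgn n * (odn n)%:R ^+ (2 * p)) 1 odn
  _ (fun n => 2 * odn n)%N s m p
  (fun=> erefl) (fun=> erefl) leq_odn.
rewrite expr1n mulr1 => ->.
congr (_ + _); apply: eq_big_nat => r /andP [hr1 hr2].
- congr (_ * _); rewrite /serJ fDn_lambert_HJTU; apply: eq_dseries => // n J _ _.
  rewrite !expr1n !mulr1 !expr_div_n exprMn.
  rewrite (exprD_eq (odn n)%:R (_ : 2 * p = 2 * r + (2 * p - 2 * r))%N); [ring | lia].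
- rewrite -mulrA mulrCA; congr (_ * _).
  rewrite /serT fDn_lambert_HJTU dseriesZ [RHS]dseriesC; apply: eq_dseries => n J _ _; first nia.
  rewrite /sgn !expr1n !mulr1 !expr_div_n exprMn.
  rewrite (exprD_eq (odn J)%:R (_ : 2 * r = 2 * p + (2 * r - 2 * p))%N); last lia.
  rewrite (exprD_eq (2 : rat) (_ : 2 * r = 2 * p + (2 * r - 2 * p))%N) ?invfM; [ring | lia].
Qed.

Lemma serVIII_even s p m : (0 < s)%N ->
  ((2 * s).-1)`!%:R * (-1) ^+ s.-1 * serVIII (2 * s) (2 * p).+1 m =
     \sum_(1 <= r < p.+1) tce s r * fDn (2 * r).-1 (serR (2 * p - 2 * r).+2) m
   + \sum_(p.+1 <= r < s.+1) tce s r * fDn (2 * p).+1 (serP (2 * r - 2 * p).-2) m.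
Proof.
move=> hs; have -> := lambert_even_tce (fun n => sgn n * (odn n)%:R ^+ (2 * p).+1) (-1) odn
  _ (fun n => 2 * odn n)%N s m p.+1 hs (ltn0Sn p)
  (fun=> erefl) (fun=> erefl) leq_odn.
congr (_ + _); apply: eq_big_nat => r /andP [hr1 hr2]; congr (_ * _).
- rewrite /serR fDn_lambert_FGQR; apply: eq_dseries => n J _ _; first nia.
  rewrite exprMn.
  rewrite (exprD_eq (odn n)%:R (_ : (2 * p).+1 = (2 * r).-1 + (2 * p - 2 * r).+2)%N); [ring | lia].
- rewrite /serP fDn_lambert_CDNP [RHS]dseriesC; apply: eq_dseries => n J _ _; first nia.
  rewrite /sgn exprMn.
  rewrite (exprD_eq J%:R (_ : (2 * r).-1 = (2 * p).+1 + (2 * r - 2 * p).-2)%N); [ring | lia].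
Qed.

Lemma serVIII_odd s p m :
  (2 * s)`!%:R * (-1) ^+ s * serVIII (2 * s).+1 (2 * p).+1 m =
     \sum_(0 <= r < p.+1) tco s r * fDn (2 * r) (serU (2 * p - 2 * r).+1) m
   + \sum_(p.+1 <= r < s.+1) 2 ^- (2 * r - 2 * p - 1) * tco s r *
       fDn (2 * p).+1 (serU (2 * r - 2 * p).-1) m.
Proof.
have -> := lambert_odd_tco (fun n => sgn n * (odn n)%:R ^+ (2 * p).+1) (-1) odn
  _ (fun n => 2 * odn n)%N s m p.+1
  (fun=> erefl) (fun=> erefl) leq_odn.
congr (_ + _); apply: eq_big_nat => r /andP [hr1 hr2].
- congr (_ * _); rewrite /serU fDn_lambert_HJTU; apply: eq_dseries => // n J _ _.
  rewrite !expr_div_n exprMn.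
  rewrite (exprD_eq (odn n)%:R (_ : (2 * p).+1 = 2 * r + (2 * p - 2 * r).+1)%N); [ring | lia].
- rewrite -mulrA mulrCA; congr (_ * _).
  rewrite /serU fDn_lambert_HJTU dseriesZ [RHS]dseriesC; apply: eq_dseries => n J _ _; first nia.
  rewrite /sgn !expr_div_n exprMn.
  rewrite (_ : 2 * r - 2 * p - 1 = (2 * r - 2 * p).-1)%N; last lia.
  rewrite (exprD_eq (odn J)%:R (_ : 2 * r = (2 * p).+1 + (2 * r - 2 * p).-1)%N); last lia.
  rewrite (exprD_eq (2 : rat) (_ : 2 * r = (2 * p).+1 + (2 * r - 2 * p).-1)%N) ?invfM; [ring | lia].
Qed.

Theorem theorem3p2 (s p : nat) (hs : (1 <= s)%N) :
  (* 1 *)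
  (forall m, ((2 * s).-1)`!%:R * serI (2 * s) (2 * p) m =
     \sum_(1 <= r < p.+1) tce s r * fsq (fDn (2 * r).-1 (serA (2 * p - 2 * r).+1)) m
   + \sum_(p.+1 <= r < s.+1) tce s r * fsq (fDn (2 * p) (serA (2 * r - 2 * p).-1)) m) /\
  (* 2 *)
  (forall m, (2 * s)`!%:R * serI (2 * s).+1 (2 * p).+1 m =
     \sum_(0 <= r < p.+1) 2 ^- (2 * r) * tco s r * fDn (2 * r) (serC (2 * p - 2 * r).+1) m
   + \sum_(p.+1 <= r < s.+1) 2 ^- (2 * r) * tco s r * fDn (2 * p).+1 (serF (2 * r - 2 * p).-1) m) /\
  (* 3 *)
  (forall m, ((2 * s).-1)`!%:R * (-1) ^+ s.-1 * serII (2 * s) (2 * p) m =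
     \sum_(1 <= r < p.+1) tce s r * fsq (fDn (2 * r).-1 (serL (2 * p - 2 * r).+1)) m
   + \sum_(p.+1 <= r < s.+1) tce s r * fsq (fDn (2 * p) (serB (2 * r - 2 * p).-1)) m) /\
  (* 4 *)
  (forall m, (2 * s)`!%:R * (-1) ^+ s * serII (2 * s).+1 (2 * p) m =
     \sum_(0 <= r < p) 2 ^- (2 * r) * tco s r * fDn (2 * r) (serN (2 * p - 2 * r)) m
   + \sum_(p <= r < s.+1) 2 ^- (2 * r) * tco s r * fDn (2 * p) (serG (2 * r - 2 * p)) m) /\
  (* 5 *)
  (forall m, ((2 * s).-1)`!%:R * serIII (2 * s) (2 * p) m =
     \sum_(1 <= r < p.+1) tce s r * fDn (2 * r).-1 (serF (2 * p - 2 * r).+1) m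
   + \sum_(p.+1 <= r < s.+1) tce s r * fDn (2 * p) (serC (2 * r - 2 * p).-1) m) /\
  (* 6 *)
  (forall m, (2 * s)`!%:R * serIII (2 * s).+1 (2 * p).+1 m =
     \sum_(0 <= r < p.+1) tco s r * fDn (2 * r) (serH (2 * p - 2 * r).+1) m
   + \sum_(p.+1 <= r < s.+1) 2 ^- (2 * r - 2 * p - 1) * tco s r * fDn (2 * p).+1 (serH (2 * r - 2 * p).-1) m) /\
  (* 7 *)
  (forall m, ((2 * s).-1)`!%:R * (-1) ^+ s.-1 * serIV (2 * s) (2 * p) m =
     \sum_(1 <= r < p.+1) tce s r * fDn (2 * r).-1 (serQ (2 * p - 2 * r).+1) m
   + \sum_(p.+1 <= r < s.+1) tce s r * fDn (2 * p) (serD (2 * r - 2 * p).-1) m) /\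
  (* 8 *)
  (forall m, (2 * s)`!%:R * (-1) ^+ s * serIV (2 * s).+1 (2 * p) m =
     \sum_(0 <= r < p) tco s r * fDn (2 * r) (serT (2 * p - 2 * r)) m
   + \sum_(p <= r < s.+1) 2 ^- (2 * r - 2 * p) * tco s r * fDn (2 * p) (serJ (2 * r - 2 * p)) m) /\
  (* 9 *)
  (forall m, ((2 * s).-1)`!%:R * serV (2 * s) (2 * p) m =
     \sum_(1 <= r < p.+1) tce s r * fsq (fDn (2 * r).-1 (serB (2 * p - 2 * r).+1)) m
   + \sum_(p.+1 <= r < s.+1) tce s r * fsq (fDn (2 * p) (serL (2 * r - 2 * p).-1)) m) /\
  (* 10 *)
  (forall m, (2 * s)`!%:R * serV (2 * s).+1 (2 * p).+1 m =
     \sum_(0 <= r < p.+1) 2 ^- (2 * r) * tco s r * fDn (2 * r) (serD (2 * p - 2 * r).+1) m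
   + \sum_(p.+1 <= r < s.+1) 2 ^- (2 * r) * tco s r * fDn (2 * p).+1 (serQ (2 * r - 2 * p).-1) m) /\
  (* 11 *)
  (forall m, ((2 * s).-1)`!%:R * (-1) ^+ s.-1 * serVI (2 * s) (2 * p) m =
     \sum_(1 <= r < p.+1) tce s r * fsq (fDn (2 * r).-1 (serM (2 * p - 2 * r).+1)) m
   + \sum_(p.+1 <= r < s.+1) tce s r * fsq (fDn (2 * p) (serM (2 * r - 2 * p).-1)) m) /\
  (* 12 *)
  (forall m, (2 * s)`!%:R * (-1) ^+ s * serVI (2 * s).+1 (2 * p) m =
     \sum_(0 <= r < p) 2 ^- (2 * r) * tco s r * fDn (2 * r) (serP (2 * p - 2 * r)) m
   + \sum_(p <= r < s.+1) 2 ^- (2 * r) * tco s r * fDn (2 * p) (serR (2 * r - 2 * p)) m) /\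
  (* 13 *)
  (forall m, ((2 * s).-1)`!%:R * serVII (2 * s) (2 * p).+1 m =
     \sum_(1 <= r < p.+1) tce s r * fDn (2 * r).-1 (serG (2 * p - 2 * r).+2) m
   + \sum_(p.+1 <= r < s.+1) tce s r * fDn (2 * p).+1 (serN (2 * r - 2 * p).-2) m) /\
  (* 14 *)
  (forall m, (2 * s)`!%:R * serVII (2 * s).+1 (2 * p) m =
     \sum_(0 <= r < p) tco s r * fDn (2 * r) (serJ (2 * p - 2 * r)) m
   + \sum_(p <= r < s.+1) 2 ^- (2 * r - 2 * p) * tco s r * fDn (2 * p) (serT (2 * r - 2 * p)) m) /\
  (* 15 *)
  (forall m, ((2 * s).-1)`!%:R * (-1) ^+ s.-1 * serVIII (2 * s) (2 * p).+1 m =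
     \sum_(1 <= r < p.+1) tce s r * fDn (2 * r).-1 (serR (2 * p - 2 * r).+2) m
   + \sum_(p.+1 <= r < s.+1) tce s r * fDn (2 * p).+1 (serP (2 * r - 2 * p).-2) m) /\
  (* 16 *)
  (forall m, (2 * s)`!%:R * (-1) ^+ s * serVIII (2 * s).+1 (2 * p).+1 m =
     \sum_(0 <= r < p.+1) tco s r * fDn (2 * r) (serU (2 * p - 2 * r).+1) m
   + \sum_(p.+1 <= r < s.+1) 2 ^- (2 * r - 2 * p - 1) * tco s r * fDn (2 * p).+1 (serU (2 * r - 2 * p).-1) m).
Proof.
repeat split; move=> m.
- exact: serI_even.
- exact: serI_odd.
- exact: serII_even.
- exact: serII_odd.
- exact: serIII_even.
- exact: serIII_odd.
- exact: serIV_even.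
- exact: serIV_odd.
- exact: serV_even.
- exact: serV_odd.
- exact: serVI_even.
- exact: serVI_odd.
- exact: serVII_even.
- exact: serVII_odd.
- exact: serVIII_even.
- exact: serVIII_odd.
Qed.
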